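(* Let $\phi:\mathcal S\times\mathcal A\times[0,1]\to\mathbb R$ be bounded and such that $\mathcal Q_\phi$ is well defined, and set $\overline\phi=\sup_{s,a,\tau}\phi(s,a,\tau)$, $\underline\phi=\inf_{s,a,\tau}\phi(s,a,\tau)$. Let $F_\infty^{-1}(\cdot;s,a)$ and $\underline F_\infty^{-1}(\cdot;s,a)$ be the quantile functions of the fixed points of $\mathcal T^\pi$ and of $\mathcal Q_\phi\mathcal T^\pi$, respectively. Then for all $(s,a)$ and $\tau$, $$F_\infty^{-1}(\tau;s,a)-\phi(s,a,\tau)-\frac{\gamma}{1-\gamma}\overline\phi\ \le\ \underline F^{-1}_\infty(\tau;s,a)\ \le\ F_\infty^{-1}(\tau;s,a)-\phi(s,a,\tau)-\frac{\gamma}{1-\gamma}\underline\phi.$$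
   Context: Setting: an infinite-horizon discounted MDP with finite state set $\mathcal S$, finite action set $\mathcal A$, transition kernel $\mathcal P(\cdot\mid s,a)$, bounded reward distributions $\mathcal R(s,a)$ on $\mathbb R$, discount $\gamma\in(0,1)$, and a policy $\pi$. For a distribution $\nu$ on $\mathbb R$, $F_\nu$ is its CDF and $F_\nu^{-1}(\tau)=\inf\{x:\tau\le F_\nu(x)\}$ its quantile function. The distributional Bellman operator on $\eta\in\mathscr P(\mathbb R)^{\mathcal S\times\mathcal A}$ is defined by $F_{\mathcal T^\pi\eta(s,a)}(z)=\sum_{s',a'}\mathcal P(s'\mid s,a)\pi(a'\mid s')\int F_{\eta(s',a')}\big(\tfrac{z-r}{\gamma}\big)\,dF_{\mathcal R(s,a)}(r)$. Quantile distortion operator: $\mathcal Q_\phi\eta$ is defined by $F^{-1}_{\mathcal Q_\phi\eta(s,a)}(\tau)=F^{-1}_{\eta(s,a)}(\tau)-\phi(s,a,\tau)$ (with $\phi$ such that this is again a quantile function). Both $\mathcal T^\pi$ and $\mathcal Q_\phi\mathcal T^\pi$ are $\gamma$-contractions in the supremum Wasserstein metric $\bar w_p(\eta,\eta')=\sup_{(s,a)}w_p(\eta(s,a),\eta'(s,a))$ on distributions with bounded support, so they have unique fixed points. *)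

From HB Require Import structures.
From mathcomp Require Import all_boot all_order all_algebra.
From mathcomp Require Import all_classical all_reals all_analysis.
Set Implicit Arguments. Unset Strict Implicit. Unset Printing Implicit Defensive.
Import Order.TTheory GRing.Theory Num.Theory.
Local Open Scope classical_set_scope.
Local Open Scope ring_scope.

Notation distr R := (probability R R).

Definition cdfR (R : realType) (nu : distr R) (x : R) : R :=
  fine (nu [set` `]-oo, x]]).

Definition quantile (R : realType) (F : R -> R) (tau : R) : R :=
  inf [set x | tau <= F x].

Definition bounded_support (R : realType) (nu : distr R) : Prop :=
  exists M : R, nu [set` `[- M, M]] = 1%E.

Definition bellman_cdf (R : realType) (S A : finType)
  (P : S -> A -> S -> R) (Rw : S -> A -> distr R) (gamma : R)
  (pi : S -> A -> R) (eta : S -> A -> distr R) (s : S) (a : A) (z : R) : R :=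
  \sum_(s' : S) \sum_(a' : A)
     P s a s' * pi s' a' *
     fine (\int[Rw s a]_(r in setT) (cdfR (eta s' a') ((z - r) / gamma))%:E).

Definition is_fixpoint_T (R : realType) (S A : finType)
  (P : S -> A -> S -> R) (Rw : S -> A -> distr R) (gamma : R)
  (pi : S -> A -> R) (eta : S -> A -> distr R) : Prop :=
  forall s a z, cdfR (eta s a) z = bellman_cdf P Rw gamma pi eta s a z.

Definition is_fixpoint_QT (R : realType) (S A : finType)
  (P : S -> A -> S -> R) (Rw : S -> A -> distr R) (gamma : R)
  (pi : S -> A -> R) (phi : S -> A -> R -> R) (eta : S -> A -> distr R) : Prop :=
  forall s a tau, 0 < tau <= 1 ->
    quantile (cdfR (eta s a)) tau =
    quantile (bellman_cdf P Rw gamma pi eta s a) tau - phi s a tau.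

Definition phi_range (R : realType) (S A : finType) (phi : S -> A -> R -> R) : set R :=
  [set y | exists s a t, 0 <= t <= 1 /\ phi s a t = y].

(* Both fixed points have bounded support, so the quantile gap
   d = sup_{s,a,tau} (F_eta^{-1}(tau;s,a) - F_eta'^{-1}(tau;s,a)) is finite.
   A quantile gap of at most c between two families of laws is a domination of
   their CDFs with shift c (up to an arbitrarily small slack); since the Bellman
   operator rescales returns by gamma, it turns a shift c into a shift gamma c,
   so the quantiles of T^pi eta and T^pi eta' differ by at most gamma d.  The two
   fixed-point equations then give gap(s,a,tau) <= gamma d + phi(s,a,tau), hence
   d <= gamma d + sup phi, which yields the lower bound; exchanging the roles of
   eta and eta' yields the upper bound with inf phi. *)

From HB Require Import structures.
From mathcomp Require Import all_boot all_order all_algebra.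
From mathcomp Require Import all_classical all_reals all_analysis.
From mathcomp Require Import ring lra.
Import Order.TTheory GRing.Theory Num.Theory.
Local Open Scope classical_set_scope.
Local Open Scope ring_scope.

Record bounded_cdf {R : realType} (m : R) (F : R -> R) : Prop := BoundedCdf {
  cdf_homo : {homo F : x y / x <= y};
  cdf_unit : forall x, 0 <= F x <= 1;
  cdf_eq0 : forall x, x <= - m -> F x = 0;
  cdf_eq1 : forall x, m <= x -> F x = 1 }.
Arguments cdf_homo {R m F}.
Arguments cdf_unit {R m F}.
Arguments cdf_eq0 {R m F}.
Arguments cdf_eq1 {R m F}.

Section bounded_cdf.
Context {R : realType}.
Implicit Types (m : R) (F : R -> R).

Lemma bounded_cdfW {m m' F} : m <= m' -> bounded_cdf m F -> bounded_cdf m' F.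
Proof.
move=> mm' [Fhomo F01 F0 F1]; split=> // x xm; [apply: F0 | apply: F1].
  by rewrite (le_trans xm) // lerN2.
exact: le_trans xm.
Qed.

Lemma bounded_cdf_uniform {T : finType} {F : T -> R -> R} :
  (forall i, exists m, bounded_cdf m (F i)) -> exists m, forall i, bounded_cdf m (F i).
Proof.
move=> /choice[f hf]; exists (\sum_i `|f i|) => i.
apply: bounded_cdfW (hf i); rewrite (le_trans (ler_norm _)) //.
by rewrite (bigD1 i) //= lerDl sumr_ge0.
Qed.

Lemma cdfR_bounded {nu : distr R} : bounded_support nu -> exists m, bounded_cdf m (cdfR nu).
Proof.
case=> M nuM; exists (`|M| + 1).
have M_le : - `|M| <= M <= `|M| by rewrite -ler_norml.
have nuM_compl : nu (~` [set` `[- M, M]]) = 0%E.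
  by rewrite probability_setC ?nuM ?subee //; exact: measurable_itv.
split.
- move=> x y xy; rewrite /cdfR fine_le ?fin_num_measure ?le_measure ?inE //.
  by apply: subitvPr; rewrite bnd_simp.
- move=> x; rewrite /cdfR fine_ge0 ?measure_ge0 //=.
  by rewrite -lee_fin fineK ?fin_num_measure // probability_le1.
- move=> x xm; rewrite /cdfR.
  suff -> : nu [set` `]-oo, x]] = 0%E by [].
  apply/eqP; rewrite eq_le measure_ge0 andbT -nuM_compl le_measure ?inE //.
    by apply: measurableC; exact: measurable_itv.
  by move=> y /=; rewrite !in_itv /= => yx /andP[My _]; clear nuM nuM_compl; lra.
- move=> x mx; rewrite /cdfR.
  suff -> : nu [set` `]-oo, x]] = 1%E by [].
  apply/eqP; rewrite eq_le probability_le1 //= -nuM le_measure ?inE //.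
  by move=> y /=; rewrite !in_itv /= => /andP[_ yM]; clear nuM nuM_compl; lra.
Qed.
End bounded_cdf.

Section unit_valued_integral.
Context {R : realType} (mu : distr R).
Implicit Types (h : R -> R) (B : set R).

Lemma integrable_unit_valued h : measurable_fun setT h ->
  (forall r, 0 <= h r <= 1) -> mu.-integrable setT (EFin \o h).
Proof.
move=> mh h01; apply: measurable_bounded_integrable => //.
  exact: le_lt_trans (probability_le1 mu measurableT) (ltry _).
exists 1; split => // M M1 r _ /=; have /andP[h0 h1] := h01 r.
by rewrite ger0_norm // (le_trans h1 (ltW M1)).
Qed.

Lemma le_Rintegral_unit_valued h1 h2 :
  measurable_fun setT h1 -> measurable_fun setT h2 ->
  (forall r, 0 <= h1 r <= 1) -> (forall r, 0 <= h2 r <= 1) ->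
  (forall r, h1 r <= h2 r) -> \int[mu]_r h1 r <= \int[mu]_r h2 r.
Proof.
move=> mh1 mh2 h1_01 h2_01 h12.
by apply: le_Rintegral => //; exact: integrable_unit_valued.
Qed.

Lemma Rintegral_unit_valued h : measurable_fun setT h ->
  (forall r, 0 <= h r <= 1) -> 0 <= \int[mu]_r h r <= 1.
Proof.
move=> mh h01; rewrite Rintegral_ge0 => [|r _]; last by case/andP: (h01 r).
have -> : 1 = \int[mu]_(r in setT) 1.
  by rewrite Rintegral_cst // mul1r (congr1 fine (probability_setT mu)).
apply: le_Rintegral => //; first exact: integrable_unit_valued.
  exact: finite_measure_integrable_cst.
by move=> r _; case/andP: (h01 r).
Qed.

Lemma Rintegral_ae_cst {h B c} : measurable B -> mu B = 1%E ->
  measurable_fun setT h -> (forall r, B r -> h r = c) -> \int[mu]_r h r = c.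
Proof.
move=> mB muB mh hB.
have muBc : mu (~` B) = 0%E by rewrite probability_setC // muB subee.
rewrite /Rintegral (@ae_eq_integral _ _ _ mu setT (cst c%:E)) //.
- by rewrite integral_cst // (congr1 (fun x => c%:E * x)%E (probability_setT mu)) mule1.
- exact/measurable_realfun.measurable_EFinP.
- exists (~` B); split => //; first exact: measurableC.
  by move=> r /= /not_implyP[_ hr]; apply: contra_not hr => /hB ->.
Qed.
End unit_valued_integral.

Section quantile.
Context {R : realType}.
Implicit Types (F G : R -> R) (m tau c : R).

Lemma quantile_set_neq0 {F m tau} : bounded_cdf m F -> tau <= 1 ->
  [set x | tau <= F x] !=set0.
Proof. by move=> hF tau1; exists m; rewrite /= (cdf_eq1 hF). Qed.

Lemma quantile_set_lbound {F m tau} : bounded_cdf m F -> 0 < tau ->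
  lbound [set x | tau <= F x] (- m).
Proof.
move=> hF tau0 x /=; apply: contraTT; rewrite -!ltNge => xm.
by rewrite (cdf_eq0 hF) // ltW.
Qed.

Lemma quantile_le {F m tau x} : bounded_cdf m F -> 0 < tau -> tau <= F x ->
  quantile F tau <= x.
Proof.
move=> hF tau0 Fx; apply: ge_inf Fx.
by exists (- m); exact: quantile_set_lbound hF tau0.
Qed.

Lemma quantile_bounds {F m tau} : bounded_cdf m F -> 0 < tau <= 1 ->
  - m <= quantile F tau <= m.
Proof.
move=> hF /andP[tau0 tau1]; apply/andP; split.
  apply: lb_le_inf; first exact: quantile_set_neq0 hF tau1.
  exact: quantile_set_lbound hF tau0.
by apply: (quantile_le hF tau0); rewrite (cdf_eq1 hF).
Qed.

Lemma quantile_ge_from_cdf {F G m m' c tau} : bounded_cdf m F -> bounded_cdf m' G ->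
  (forall x, F x <= G (x + c)) -> 0 < tau <= 1 ->
  quantile G tau - c <= quantile F tau.
Proof.
move=> hF hG hFG /andP[tau0 tau1].
apply: lb_le_inf (quantile_set_neq0 hF tau1) _ => x /= Fx.
by rewrite lerBlDr; apply: quantile_le hG tau0 (le_trans Fx (hFG x)).
Qed.

(* [bounded_cdf] does not require right-continuity, so the infimum defining a
   quantile need not be attained: hence the slack [e]. *)
Lemma cdf_le_from_quantile {F G m m' c} : bounded_cdf m F -> bounded_cdf m' G ->
  (forall tau, 0 < tau <= 1 -> quantile G tau - c <= quantile F tau) ->
  forall x e, 0 < e -> F x <= G (x + c + e).
Proof.
move=> hF hG hFG x e e0.
have [Fx0|Fx_gt0] := leP (F x) 0.
  by rewrite (le_trans Fx0) //; case/andP: (cdf_unit hG (x + c + e)).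
have Fx1 : F x <= 1 by case/andP: (cdf_unit hF x).
have qG_lt : quantile G (F x) < x + c + e.
  have := hFG (F x); rewrite Fx_gt0 Fx1 => /(_ isT).
  have := quantile_le hF Fx_gt0 (lexx (F x)); lra.
have [y /= Gy yx] := inf_lt (quantile_set_neq0 hG Fx1) qG_lt.
by rewrite (le_trans Gy) // (cdf_homo hG) // ltW.
Qed.
End quantile.

Definition bellman_supported {R : realType} {S A : finType}
    (P : S -> A -> S -> R) (Rw : S -> A -> distr R) (g : R) (pi : S -> A -> R)
    (m : R) (eta : S -> A -> distr R) :=
  forall s a, bounded_cdf m (cdfR (eta s a)) /\
              bounded_cdf m (bellman_cdf P Rw g pi eta s a).

Section bellman.
Context {R : realType} {S A : finType} {P : S -> A -> S -> R}.
Context {Rw : S -> A -> distr R} {g : R} { pi : S -> A -> R }.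
Hypothesis P_ge0 : forall s a s', 0 <= P s a s'.
Hypothesis P_sum1 : forall s a, \sum_s' P s a s' = 1.
Hypothesis pi_ge0 : forall s a, 0 <= pi s a.
Hypothesis pi_sum1 : forall s, \sum_a pi s a = 1.
Hypothesis g_gt0 : 0 < g.
Hypothesis g_lt1 : g < 1.

Local Notation T := (bellman_cdf P Rw g pi).
Local Notation supported := (bellman_supported P Rw g pi).

Lemma bellman_cdfE eta s a z : T eta s a z =
  \sum_s' \sum_a' P s a s' * pi s' a' * \int[Rw s a]_r cdfR (eta s' a') ((z - r) / g).
Proof. by []. Qed.

Lemma bellman_weights_cst s a (f : S -> A -> R) c : (forall s' a', f s' a' = c) ->
  \sum_s' \sum_a' P s a s' * pi s' a' * f s' a' = c.
Proof.
move=> fc; under eq_bigr => s' _ do under eq_bigr => a' _ do rewrite fc mulrAC.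
under eq_bigr => s' _ do rewrite -mulr_sumr pi_sum1 mulr1.
by rewrite -mulr_suml P_sum1 mul1r.
Qed.

Lemma bellman_weights_unit s a (f : S -> A -> R) : (forall s' a', 0 <= f s' a' <= 1) ->
  0 <= \sum_s' \sum_a' P s a s' * pi s' a' * f s' a' <= 1.
Proof.
move=> f01; apply/andP; split.
  apply: sumr_ge0 => s' _; apply: sumr_ge0 => a' _.
  by rewrite !mulr_ge0 //; case/andP: (f01 s' a').
rewrite -[X in _ <= X](@bellman_weights_cst s a (fun _ _ => 1) 1) //.
apply: ler_sum => s' _; apply: ler_sum => a' _.
by rewrite ler_wpM2l ?mulr_ge0 //; case/andP: (f01 s' a').
Qed.

Lemma measurable_cdf_reflect (F : R -> R) z : {homo F : x y / x <= y} ->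
  measurable_fun setT (fun r : R => F ((z - r) / g)).
Proof.
move=> Fhomo; apply: measurable_realfun.nonincreasing_measurable => // u v uv.
by apply: Fhomo; rewrite ler_pM2r ?invr_gt0 // lerB.
Qed.

Lemma le_bellman_cdf {X Y : S -> A -> distr R} {mX mY s a z z'} :
  (forall s a, bounded_cdf mX (cdfR (X s a))) ->
  (forall s a, bounded_cdf mY (cdfR (Y s a))) ->
  (forall s' a' r, cdfR (Y s' a') ((z - r) / g) <= cdfR (X s' a') ((z' - r) / g)) ->
  T Y s a z <= T X s a z'.
Proof.
move=> hX hY hYX; rewrite !bellman_cdfE.
apply: ler_sum => s' _; apply: ler_sum => a' _; rewrite ler_wpM2l ?mulr_ge0 //.
apply: le_Rintegral_unit_valued => //.
- exact: measurable_cdf_reflect (cdf_homo (hY _ _)).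
- exact: measurable_cdf_reflect (cdf_homo (hX _ _)).
- by move=> r; exact: (cdf_unit (hY _ _)).
- by move=> r; exact: (cdf_unit (hX _ _)).
Qed.

Lemma bellman_cdf_shift {X Y : S -> A -> distr R} {mX mY c s a} z :
  (forall s a, bounded_cdf mX (cdfR (X s a))) ->
  (forall s a, bounded_cdf mY (cdfR (Y s a))) ->
  (forall s a x, cdfR (Y s a) x <= cdfR (X s a) (x + c)) ->
  T Y s a z <= T X s a (z + g * c).
Proof.
move=> hX hY hYX; apply: (le_bellman_cdf hX hY) => s' a' r.
have -> : (z + g * c - r) / g = (z - r) / g + c by field; rewrite gt_eqF.
exact: hYX.
Qed.

Lemma bounded_cdf_bellman {eta m s a} : bounded_support (Rw s a) ->
  (forall s a, bounded_cdf m (cdfR (eta s a))) -> exists m', bounded_cdf m' (T eta s a).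
Proof.
case=> M RwM heta; exists (g * `|m| + `|M|).
have M_le : - `|M| <= M <= `|M| by rewrite -ler_norml.
have gm_le : - (g * `|m|) <= g * m <= g * `|m| by rewrite -ler_norml normrM gtr0_norm.
have int_cst s' a' z c :
    (forall r, - M <= r <= M -> cdfR (eta s' a') ((z - r) / g) = c) ->
    \int[Rw s a]_r cdfR (eta s' a') ((z - r) / g) = c.
  move=> hc; apply: (Rintegral_ae_cst (Rw s a) (measurable_itv `[- M, M]) RwM).
    exact: measurable_cdf_reflect (cdf_homo (heta _ _)).
  by move=> r /=; rewrite in_itv /=; exact: hc.
split.
- move=> z z' zz'; apply: (le_bellman_cdf heta heta) => s' a' r.
  by apply: (cdf_homo (heta _ _)); rewrite ler_pM2r ?invr_gt0 // lerB.
- move=> z; rewrite bellman_cdfE; apply: bellman_weights_unit => s' a'.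
  apply: Rintegral_unit_valued; first exact: measurable_cdf_reflect (cdf_homo (heta _ _)).
  by move=> r; exact: (cdf_unit (heta _ _)).
- move=> z zm; rewrite bellman_cdfE; apply: bellman_weights_cst => s' a'.
  apply: int_cst => r /andP[Mr rM]; apply: (cdf_eq0 (heta _ _)).
  by rewrite ler_pdivrMr // mulNr mulrC; lra.
- move=> z mz; rewrite bellman_cdfE; apply: bellman_weights_cst => s' a'.
  apply: int_cst => r /andP[Mr rM]; apply: (cdf_eq1 (heta _ _)).
  by rewrite ler_pdivlMr // mulrC; lra.
Qed.

Lemma exists_bellman_supported {eta : S -> A -> distr R} :
  (forall s a, bounded_support (Rw s a)) -> (forall s a, bounded_support (eta s a)) ->
  exists m, supported m eta.
Proof.
move=> hRw heta.
have [m1 hm1] := bounded_cdf_uniform (fun p : S * A => cdfR_bounded (heta p.1 p.2)).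
have [m2 hm2] := bounded_cdf_uniform
  (fun p : S * A => bounded_cdf_bellman (hRw p.1 p.2) (fun s a => hm1 (s, a))).
exists (Num.max m1 m2) => s a; split.
  by apply: bounded_cdfW (hm1 (s, a)); rewrite le_max lexx.
by apply: bounded_cdfW (hm2 (s, a)); rewrite le_max lexx orbT.
Qed.

Lemma bellman_quantile_contraction {X Y : S -> A -> distr R} {mX mY c} :
  supported mX X -> supported mY Y ->
  (forall s a tau, 0 < tau <= 1 ->
    quantile (cdfR (X s a)) tau - c <= quantile (cdfR (Y s a)) tau) ->
  forall s a tau, 0 < tau <= 1 ->
    quantile (T X s a) tau - g * c <= quantile (T Y s a) tau.
Proof.
move=> hX hY hXY s a tau htau; apply/ler_addgt0Pr => e e0.
have cdf_le s' a' x : cdfR (Y s' a') x <= cdfR (X s' a') (x + (c + e / g)).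
  rewrite addrA; apply: (cdf_le_from_quantile (hY s' a').1 (hX s' a').1) => //.
    exact: hXY.
  by rewrite divr_gt0.
have shift z :=
  bellman_cdf_shift z (fun s a => (hX s a).1) (fun s a => (hY s a).1) cdf_le.
have := quantile_ge_from_cdf (hY s a).2 (hX s a).2 (shift s a) htau.
have -> : g * (c + e / g) = g * c + e by field; rewrite gt_eqF.
lra.
Qed.

Lemma fixpoint_quantile_gap {X Y : S -> A -> distr R} {mX mY}
    (psiX psiY : S -> A -> R -> R) K :
  supported mX X -> supported mY Y ->
  (forall s a tau, 0 < tau <= 1 ->
    quantile (cdfR (X s a)) tau = quantile (T X s a) tau - psiX s a tau) ->
  (forall s a tau, 0 < tau <= 1 ->
    quantile (cdfR (Y s a)) tau = quantile (T Y s a) tau - psiY s a tau) ->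
  (forall s a tau, 0 < tau <= 1 -> psiY s a tau - psiX s a tau <= K) ->
  forall s a tau, 0 < tau <= 1 ->
    quantile (cdfR (X s a)) tau - quantile (cdfR (Y s a)) tau
      <= g / (1 - g) * K + (psiY s a tau - psiX s a tau).
Proof.
move=> hX hY fixX fixY psiK s0 a0 tau0 htau0.
pose gap s a tau := quantile (cdfR (X s a)) tau - quantile (cdfR (Y s a)) tau.
pose D := [set t | exists s a tau, 0 < tau <= 1 /\ t = gap s a tau].
have D_ub : has_ubound D.
  exists (mX + mY) => _ [s [a [tau [htau ->]]]].
  have := quantile_bounds (hX s a).1 htau; have := quantile_bounds (hY s a).1 htau.
  by rewrite /gap => /andP[? ?] /andP[? ?]; lra.
pose d := sup D.
have XY_d s a tau : 0 < tau <= 1 ->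
    quantile (cdfR (X s a)) tau - d <= quantile (cdfR (Y s a)) tau.
  move=> htau; have : gap s a tau <= d by apply: ub_le_sup => //; exists s, a, tau.
  by rewrite /gap; lra.
have gap_step s a tau : 0 < tau <= 1 ->
    gap s a tau <= g * d + (psiY s a tau - psiX s a tau).
  move=> htau; have := bellman_quantile_contraction hX hY XY_d s a tau htau.
  by rewrite /gap (fixX _ _ _ htau) (fixY _ _ _ htau); lra.
have d_le : d <= g * d + K.
  apply: ge_sup; first by exists (gap s0 a0 tau0), s0, a0, tau0.
  move=> _ [s [a [tau [htau ->]]]].
  by have := gap_step s a tau htau; have := psiK s a tau htau; lra.
have gd_le : g * d <= g / (1 - g) * K.
  rewrite mulrAC ler_pdivlMr ?subr_gt0 // -mulrA ler_wpM2l ?(ltW g_gt0) //.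
  by rewrite mulrBr mulr1 mulrC; lra.
by have := gap_step s0 a0 tau0 htau0; rewrite /gap; lra.
Qed.
End bellman.

Theorem theorem3 (R : realType) (S A : finType)
  (P : S -> A -> S -> R) (Rw : S -> A -> distr R) (gamma : R)
  (pi : S -> A -> R) (phi : S -> A -> R -> R)
  (eta eta' : S -> A -> distr R) :
  (forall s a s', 0 <= P s a s') ->
  (forall s a, \sum_(s' : S) P s a s' = 1) ->
  (forall s a', 0 <= pi s a') ->
  (forall s, \sum_(a' : A) pi s a' = 1) ->
  (forall s a, bounded_support (Rw s a)) ->
  0 < gamma < 1 ->
  (exists C : R, forall s a t, 0 <= t <= 1 -> `|phi s a t| <= C) ->
  (forall s a, bounded_support (eta s a)) ->
  is_fixpoint_T P Rw gamma pi eta ->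
  (forall s a, bounded_support (eta' s a)) ->
  is_fixpoint_QT P Rw gamma pi phi eta' ->
  forall s a tau, 0 < tau <= 1 ->
    quantile (cdfR (eta s a)) tau - phi s a tau
      - gamma / (1 - gamma) * sup (phi_range phi)
    <= quantile (cdfR (eta' s a)) tau
    <= quantile (cdfR (eta s a)) tau - phi s a tau
      - gamma / (1 - gamma) * inf (phi_range phi).
Proof.
move=> P_ge0 P_sum1 pi_ge0 pi_sum1 hRw /andP[g_gt0 g_lt1] [C hC] heta hT heta' hQT.
have [m hm] := exists_bellman_supported P_ge0 P_sum1 pi_ge0 pi_sum1 g_gt0 hRw heta.
have [m' hm'] := exists_bellman_supported P_ge0 P_sum1 pi_ge0 pi_sum1 g_gt0 hRw heta'.
have fix_eta s a tau : 0 < tau <= 1 ->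
    quantile (cdfR (eta s a)) tau = quantile (bellman_cdf P Rw gamma pi eta s a) tau - 0.
  by move=> _; rewrite subr0; congr quantile; apply/funext => z; exact: hT.
have phi_in s a tau : 0 < tau <= 1 -> phi_range phi (phi s a tau).
  by case/andP=> tau0 tau1; exists s, a, tau; rewrite (ltW tau0) tau1.
have phi_le_sup s a tau : 0 < tau <= 1 -> phi s a tau - 0 <= sup (phi_range phi).
  move=> htau; rewrite subr0; apply: ub_le_sup (phi_in s a tau htau).
  by exists C => _ [s' [a' [t [ht <-]]]]; exact: le_trans (ler_norm _) (hC s' a' t ht).
have inf_le_phi s a tau : 0 < tau <= 1 -> 0 - phi s a tau <= - inf (phi_range phi).
  move=> htau; rewrite sub0r lerN2; apply: ge_inf (phi_in s a tau htau).
  exists (- C) => _ [s' [a' [t [ht <-]]]].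
  by move: (hC s' a' t ht); rewrite ler_norml => /andP[].
move=> s a tau htau.
have lower := fixpoint_quantile_gap P_ge0 pi_ge0 g_gt0 g_lt1 _ _ _
  hm hm' fix_eta hQT phi_le_sup s a tau htau.
have upper := fixpoint_quantile_gap P_ge0 pi_ge0 g_gt0 g_lt1 _ _ _
  hm' hm hQT fix_eta inf_le_phi s a tau htau.
by rewrite mulrN in upper; apply/andP; split; lra.
Qed.
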